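(* Fix $\beta>1$ and let $(D_n)_{n\geq1}$ be a sequence of non-empty finite sets of generalised $\beta$-digits. Let $k\geq3$ be odd, and suppose that $D_n=D_k$ for every odd $n>k$ and $D_n=\{0\}$ for every other $n>1$. With $\ell_n,u_n$ the least and greatest elements of $D_n$, $\Delta_n=u_n-\ell_n$, and $\delta_n$ the largest gap between consecutive elements of $D_n$ ($\delta_n=0$ if $|D_n|=1$), the family of inequalities $$\delta_n\leq\sum_{i=1}^{\infty}\Delta_{n+i}\,\beta^{-i}\qquad(n\geq1)$$ is equivalent to the pair of inequalities $$(\beta^2-1)\,\delta_k\leq\Delta_k\qquad\text{and}\qquad(\beta^{k-1}-\beta^{k-3})\,\delta_1\leq\Delta_k.$$
   Context: A generalised $\beta$-digit is a string $c_0.c_1\ldots c_k$ of non-negative integers, with value $\sum_{i=0}^k c_i\beta^{-i}$ (an ordinary non-negative integer is a generalised digit of length 1). Least/greatest elements and gaps are taken with respect to these values. *)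

From HB Require Import structures.
From mathcomp Require Import all_boot all_order all_algebra.
From mathcomp Require Import finmap.
From mathcomp Require Import all_classical all_reals all_analysis.
Set Implicit Arguments. Unset Strict Implicit. Unset Printing Implicit Defensive.
Import Order.TTheory GRing.Theory Num.Theory.
Local Open Scope ring_scope.
Local Open Scope fset_scope.

(* A generalised beta-digit c_0.c_1...c_k is encoded as the pair
   (c_0, [:: c_1; ...; c_k]) of non-negative integers (length >= 1). *)
Definition gdigit := (nat * seq nat)%type.

Definition gzero : gdigit := (0%N, [::]).

Definition dval (R : realType) (beta : R) (d : gdigit) : R :=
  (d.1)%:R + \sum_(i < size d.2) (nth 0%N d.2 i)%:R / beta ^+ i.+1.

Definition vals (R : realType) (beta : R) (A : {fset gdigit}) : seq R :=
  sort <=%R (undup [seq dval beta d | d <- enum_fset A]).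

Definition lowd (R : realType) (beta : R) (A : {fset gdigit}) : R :=
  head 0 (vals beta A).
Definition uppd (R : realType) (beta : R) (A : {fset gdigit}) : R :=
  last 0 (vals beta A).
Definition Deltad (R : realType) (beta : R) (A : {fset gdigit}) : R :=
  uppd beta A - lowd beta A.

Definition deltad (R : realType) (beta : R) (A : {fset gdigit}) : R :=
  let s := vals beta A in
  \big[Num.max/0]_(p <- zip s (behead s)) (p.2 - p.1).

Definition infsum (R : realType) (a : nat -> R) : R :=
  limn (fun N => \sum_(0 <= i < N) a i).

(* For n > 1 the hypotheses make D_n equal to D_k when n is odd and n >= k, and
   {0} (with delta_n = Delta_n = 0) otherwise.  Hence the right-hand side of the
   n-th inequality is Delta_k times the sum of beta^-i over the even i > 0 with
   n + i >= k: for odd n >= k this is Delta_k / (beta^2 - 1), for n = 1 it is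
   Delta_k / (beta^(k-1) - beta^(k-3)), and for every other n the inequality
   just says that a sum of nonnegative terms is nonnegative.  Such an even
   geometric tail is summed by passing to the limit in S_(N+2) = S_2 + beta^-2 S_N,
   where S_N are its partial sums started at the first nonzero term. *)

From HB Require Import structures.
From mathcomp Require Import all_boot all_order all_algebra.
From mathcomp Require Import finmap.
From mathcomp Require Import all_classical all_reals all_analysis.
From mathcomp Require Import ring.
Import numFieldNormedType.Exports.
Import Order.TTheory GRing.Theory Num.Theory.
Local Open Scope ring_scope.
Local Open Scope classical_set_scope.

Section series.
Variable R : realType.
Implicit Types (a : nat -> R) (c r : R).

Lemma is_cvg_series_geometric_le a c r : 0 <= r < 1 ->
  (forall i, 0 <= a i <= c * r ^+ i) -> cvgn (series a).
Proof.
move=> /andP[r_ge0 r_lt1] ha; have c_ge0 : 0 <= c.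
  by have /andP[a0] := ha 0%N; rewrite expr0 mulr1; apply: le_trans.
apply: (@series_le_cvg _ a (geometric c r)).
- by move=> i; have /andP[] := ha i.
- by move=> i; rewrite mulr_ge0 ?exprn_ge0.
- by move=> i; have /andP[] := ha i.
by apply: is_cvg_geometric_series; rewrite ger0_norm.
Qed.

Lemma infsum_ge0 a : (forall i, 0 <= a i) -> cvgn (series a) -> 0 <= infsum a.
Proof.
move=> a_ge0 a_cvg; apply: limr_ge => //; apply: nearW => N.
by apply: sumr_ge0 => i _.
Qed.

Lemma infsum_eventually_geometric a m p r : r != 1 -> cvgn (series a) ->
  (forall i, (i < m)%N -> a i = 0) ->
  (forall i, (m <= i)%N -> a (i + p)%N = r * a i) ->
  infsum a = series a (p + m)%N / (1 - r).
Proof.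
move=> r_neq1 a_cvg a_lt_m a_rec; set l := infsum a.
pose T N := series a (N + m)%N.
have T0 : T 0%N = 0.
  by rewrite /T /series /= big_nat_cond big1 // => i /andP[/andP[_ im] _]; apply: a_lt_m.
have T_rec N : T (N + p)%N = T p + r * T N.
  elim: N => [|N IH]; first by rewrite T0 mulr0 addr0.
  rewrite /T !addSn !seriesSr -[series a (N + p + m)]/(T (N + p)) IH.
  by rewrite -addrA mulrDr -a_rec ?leq_addl // addnAC.
have Tl : T @ \oo --> l by rewrite /T cvg_shiftn.
have Tpl : (fun N => T (N + p)%N) @ \oo --> l by rewrite cvg_shiftn.
have Tpl' : (fun N => T (N + p)%N) @ \oo --> T p + r * l.
  rewrite (funext T_rec).
  by apply: cvgD; [exact: cvg_cst|exact: cvgMl_tmp].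
have el : l = T p + r * l by exact: cvg_unique _ Tpl Tpl'.
have r1_neq0 : 1 - r != 0 by rewrite subr_eq0 eq_sym.
by apply: (mulIf r1_neq0); rewrite mulfVK // mulrBr mulr1 {1}el (mulrC l) addrK.
Qed.

Definition even_tail (beta : R) (m i : nat) : R :=
  if ~~ odd i && (m <= i)%N then (beta ^+ i)^-1 else 0.

Lemma infsum_even_tail (beta c : R) m : 1 < beta -> (2 <= m)%N -> ~~ odd m ->
  infsum (fun i => c * even_tail beta m i) = c / (beta ^+ m - beta ^+ (m - 2)).
Proof.
move=> beta_gt1 m_ge2 m_even; have beta_gt0 : 0 < beta by apply: lt_trans beta_gt1.
have r_neq1 : (beta ^+ 2)^-1 != 1 by rewrite invr_eq1 gt_eqF // expr_gt1 ?ltW.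
have tail_cvg : cvgn (series (even_tail beta m)).
  apply: (@is_cvg_series_geometric_le _ 1 beta^-1).
    by rewrite invr_ge0 ltW //= invf_lt1.
  move=> i; rewrite mul1r exprVn /even_tail.
  by case: ifP; rewrite lexx ?andbT // invr_ge0 exprn_ge0 // ltW.
rewrite (@infsum_eventually_geometric _ m 2 (beta ^+ 2)^-1) //; first last.
- move=> i mi; rewrite mulrCA /even_tail addn2 /= negbK mi.
  rewrite (leq_trans mi) ?leqW //.
  by case: (odd i); rewrite /= ?mulr0 // -invfM -exprD add2n.
- by move=> i im; rewrite /even_tail leqNgt im andbF mulr0.
- exact: (@is_cvg_seriesZ _ _ c tail_cvg).
rewrite add2n /series /= big_nat_recr ?leqW // big_nat_recr //=.
rewrite big_nat_cond big1 ?add0r; last first.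
  by move=> i /andP[/andP[_ im] _]; rewrite /even_tail leqNgt im andbF mulr0.
rewrite /even_tail /= m_even leqnn leqnSn /= mulr0 addr0.
have -> : beta ^+ m = beta ^+ (m - 2) * beta ^+ 2 by rewrite -exprD subnK.
have t_neq0 : beta ^+ (m - 2) != 0 by rewrite expf_neq0 // gt_eqF.
have b21_neq0 : beta ^+ 2 - 1 != 0 by rewrite subr_eq0 -(inj_eq invr_inj) invr1.
have -> : beta ^+ (m - 2) * beta ^+ 2 - beta ^+ (m - 2) =
          beta ^+ (m - 2) * (beta ^+ 2 - 1) by rewrite mulrBr mulr1.
by field; rewrite b21_neq0 t_neq0 gt_eqF.
Qed.
End series.

Section digit_sets.
Variable R : realType.
Implicit Types (beta : R) (A : {fset gdigit}).

Lemma vals_fset_gzero beta : vals beta [fset gzero]%fset = [:: 0].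
Proof. by rewrite /vals -fset_seq1 /= /dval /= big_ord0 addr0. Qed.

Lemma Deltad_fset_gzero beta : Deltad beta [fset gzero]%fset = 0.
Proof. by rewrite /Deltad /uppd /lowd vals_fset_gzero subrr. Qed.

Lemma deltad_fset_gzero beta : deltad beta [fset gzero]%fset = 0.
Proof. by rewrite /deltad vals_fset_gzero big_nil. Qed.

Lemma Deltad_ge0 beta A : 0 <= Deltad beta A.
Proof.
rewrite /Deltad /uppd /lowd subr_ge0.
have : sorted <=%R (vals beta A) by apply: sort_sorted; exact: le_total.
case: (vals beta A) => [|x s] //= s_sorted.
have /allP x_le := order_path_min (@le_trans _ R) s_sorted.
by have := mem_last x s; rewrite inE => /orP[/eqP ->|/x_le].
Qed.
End digit_sets.

Definition Deltad_tail {R : realType} (beta : R) (D : nat -> {fset gdigit})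
    (n : nat) : R :=
  infsum (fun i => if i == 0%N then 0 else Deltad beta (D (n + i)%N) / beta ^+ i).

Section corollary.
Context {R : realType} {beta : R} {D : nat -> {fset gdigit}} {k : nat}.
Hypotheses (beta_gt1 : 1 < beta) (k_ge3 : (3 <= k)%N) (k_odd : odd k).
Hypothesis D_odd : forall n, (k < n)%N -> odd n -> D n = D k.
Hypothesis D_gzero : forall n, (1 < n)%N -> n != k -> ~~ (odd n && (k < n)%N) ->
  D n = [fset gzero]%fset.

Let Dk := Deltad beta (D k).

Lemma D_shape n : (1 < n)%N ->
  D n = if odd n && (k <= n)%N then D k else [fset gzero]%fset.
Proof.
move=> n_gt1; have [->|n_neq_k] := eqVneq n k; first by rewrite k_odd leqnn.
case: ifP => [/andP[n_odd k_le_n]|n_not].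
  by rewrite D_odd // ltn_neqAle eq_sym n_neq_k.
by rewrite D_gzero //; apply: contraFN n_not => /andP[-> /ltnW].
Qed.

Lemma Deltad_tail_term n i : (1 <= n)%N ->
  (if i == 0%N then 0 else Deltad beta (D (n + i)%N) / beta ^+ i) =
  if (0 < i)%N && odd (n + i) && (k <= n + i)%N then Dk / beta ^+ i else 0.
Proof.
move=> n_ge1; case: (posnP i) => [->|i_gt0] //=.
rewrite D_shape; last by rewrite -addn1 leq_add.
by case: ifP; rewrite ?Deltad_fset_gzero ?mul0r.
Qed.

Lemma Deltad_tail_ge0 n : (1 <= n)%N -> 0 <= Deltad_tail beta D n.
Proof.
have beta_gt0 : 0 < beta by apply: lt_trans beta_gt1.
move=> n_ge1; have term_bound i :
    0 <= (if i == 0%N then 0 else Deltad beta (D (n + i)%N) / beta ^+ i) <=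
    Dk * beta^-1 ^+ i.
  rewrite Deltad_tail_term // exprVn; case: ifP => _.
    by rewrite lexx andbT divr_ge0 ?Deltad_ge0 ?exprn_ge0 ?ltW.
  by rewrite lexx mulr_ge0 ?Deltad_ge0 ?invr_ge0 ?exprn_ge0 ?ltW.
apply: infsum_ge0 => [i|]; first by have /andP[] := term_bound i.
apply: is_cvg_series_geometric_le term_bound.
by rewrite invr_ge0 ltW //= invf_lt1.
Qed.

Lemma Deltad_tail_odd n : odd n -> (k <= n)%N ->
  Deltad_tail beta D n = Dk / (beta ^+ 2 - 1).
Proof.
move=> n_odd k_le_n; rewrite -[1](expr0 beta) -(subnn 2).
rewrite -infsum_even_tail //; congr infsum; apply: funext => i.
rewrite Deltad_tail_term ?(leq_trans _ k_le_n) ?(leq_trans _ k_ge3) //.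
rewrite oddD n_odd (leq_trans k_le_n) ?leq_addr // andbT /even_tail.
by case: i => [|[|i]] /=; rewrite ?mulr0 //; case: ifP; rewrite ?mulr0.
Qed.

Lemma Deltad_tail_1 : Deltad_tail beta D 1 = Dk / (beta ^+ (k - 1) - beta ^+ (k - 3)).
Proof.
have k1_ge2 : (2 <= k - 1)%N by rewrite ltn_subRL.
rewrite -[(k - 3)%N]/(k - (1 + 2))%N subnDA -infsum_even_tail //; last first.
  by rewrite oddB ?k_odd // (leq_trans _ k_ge3).
congr infsum; apply: funext => i; rewrite Deltad_tail_term // /even_tail.
rewrite oddD /= -leq_subLR.
case: (leqP (k - 1) i) => [k1_le_i|_]; last by rewrite !andbF mulr0.
rewrite !andbT (leq_trans (ltnW k1_ge2) k1_le_i) /=.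
by case: (odd i); rewrite /= ?mulr0.
Qed.
End corollary.

Local Open Scope fset_scope.

Theorem corollary2p3 (R : realType) (beta : R) (D : nat -> {fset gdigit})
    (k : nat) :
  1 < beta ->
  (forall n, (1 <= n)%N -> D n != fset0) ->
  (3 <= k)%N -> odd k ->
  (forall n, (k < n)%N -> odd n -> D n = D k) ->
  (forall n, (1 < n)%N -> n != k -> ~~ (odd n && (k < n)%N) ->
     D n = [fset gzero]) ->
  ((forall n, (1 <= n)%N ->
      deltad beta (D n) <=
      infsum (fun i => if i == 0%N then 0
                       else Deltad beta (D (n + i)%N) / beta ^+ i))
   <->
   ((beta ^+ 2 - 1) * deltad beta (D k) <= Deltad beta (D k) /\
    (beta ^+ (k - 1) - beta ^+ (k - 3)) * deltad beta (D 1%N)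
      <= Deltad beta (D k))).
Proof.
move=> beta_gt1 _ k_ge3 k_odd D_odd D_gzero.
have k_ge1 : (1 <= k)%N by apply: leq_trans k_ge3.
have gap2_gt0 : 0 < beta ^+ 2 - 1 by rewrite subr_gt0 -{1}(expr0 beta) ltr_eXn2l.
have gapk_gt0 : 0 < beta ^+ (k - 1) - beta ^+ (k - 3).
  by rewrite subr_gt0 ltr_eXn2l // ltn_sub2l // (leq_trans _ k_ge3).
have tail_odd := Deltad_tail_odd beta_gt1 k_ge3 k_odd D_odd D_gzero.
have tail_1 := Deltad_tail_1 beta_gt1 k_ge3 k_odd D_odd D_gzero.
split=> [tail_bound | [bound_k bound_1] n n_ge1].
  split; rewrite mulrC -ler_pdivlMr //; [rewrite -(tail_odd k) // | rewrite -tail_1];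
    exact: tail_bound.
rewrite -/(Deltad_tail beta D n).
have [->|n_neq1] := eqVneq n 1%N; first by rewrite tail_1 ler_pdivlMr // mulrC.
rewrite (D_shape k_odd D_odd D_gzero); last by rewrite ltn_neqAle eq_sym n_neq1.
case: ifP => [/andP[n_odd k_le_n]|_].
  by rewrite tail_odd // ler_pdivlMr // mulrC.
by rewrite deltad_fset_gzero (Deltad_tail_ge0 beta_gt1 k_odd D_odd D_gzero).
Qed.
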